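(* Let $F$ be a field, $A\in\mathrm{gl}(m,F)$, $\rho$ a permutation of $\Omega_n$, and $\pi$ a permutation of $\Omega_{mn}$ such that $\operatorname{supp}P_\pi\subseteq\operatorname{supp}(A\,\dot\times\,P_\rho)$. Then there exist permutations $\lambda_0,\dots,\lambda_{n-1}$ of $\Omega_m$ such that $\pi(jn+s)=\lambda_s(j)\,n+\rho(s)$ for all $j\in\Omega_m$, $s\in\Omega_n$, and $\operatorname{supp}P_{\lambda_s}\subseteq\operatorname{supp}A$ for all $s\in\Omega_n$.
   Context: $\Omega_n=\{0,1,\dots,n-1\}$ indexes rows and columns; $\mathrm{gl}(m,F)$ is the space of $m\times m$ matrices over $F$. For a permutation $\pi$ of $\Omega_n$, $P_\pi$ is the matrix with $(i,j)$ entry $1$ if $i=\pi(j)$ and $0$ otherwise. For $A=[a_{i,j}]$, $\operatorname{supp}A=\{(i,j): a_{i,j}\neq 0\}$. For $A=[a_{i,j}]_{i,j\in\Omega_m}$ and $B=[b_{r,s}]_{r,s\in\Omega_n}$, the Kronecker product $A\,\dot\times\,B$ is the $mn\times mn$ matrix whose $(in+r,\,jn+s)$ entry is $a_{i,j}b_{r,s}$. *)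

From mathcomp Require Import all_boot all_order all_fingroup all_algebra.
Set Implicit Arguments. Unset Strict Implicit. Unset Printing Implicit Defensive.
Import GRing.Theory.
Local Open Scope ring_scope.

Lemma kdiv_lt m n (k : 'I_(m * n)) : (k %/ n < m)%N.
Proof. by rewrite ltn_divLR ?(mulnC m) //; case: n k => [|n] k;
  [case: k; rewrite muln0 | ]. Qed.
Lemma kmod_lt m n (k : 'I_(m * n)) : (k %% n < n)%N.
Proof. by rewrite ltn_mod; case: n k => [|n] [k] //=; rewrite muln0. Qed.

Definition kdiv m n (k : 'I_(m * n)) : 'I_m := Ordinal (kdiv_lt k).
Definition kmod m n (k : 'I_(m * n)) : 'I_n := Ordinal (kmod_lt k).

(* The Kronecker product A \dot\times B : (i*n+r, j*n+s) entry is a_{i,j} b_{r,s}. *)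
Definition kron (F : pzRingType) m n (A : 'M[F]_m) (B : 'M[F]_n) : 'M[F]_(m * n) :=
  \matrix_(k, l) (A (kdiv k) (kdiv l) * B (kmod k) (kmod l)).

Definition pmat (F : pzRingType) n (pi : {perm 'I_n}) : 'M[F]_n :=
  \matrix_(i, j) (if i == pi j then 1 else 0).

Definition supp (F : pzRingType) m (A : 'M[F]_m) : {set 'I_m * 'I_m} :=
  [set ij | A ij.1 ij.2 != 0].

Lemma kidx_lt m n (j : 'I_m) (s : 'I_n) : (j * n + s < m * n)%N.
Proof.
case: j s => j hj [s hs] /=.
have : (j * n + s < j * n + n)%N by rewrite ltn_add2l.
move/leq_trans; apply; by rewrite -mulSnr leq_mul2r hj orbT.
Qed.
Definition kidx m n (j : 'I_m) (s : 'I_n) : 'I_(m * n) := Ordinal (kidx_lt j s).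

(* The support condition says that pi sends every index j*n + s to an index
   whose mod-n part is rho(s) (forced by the factor P_rho) and whose div-n
   part i satisfies a_{i,j} <> 0.  Hence, for fixed s, the map
   j |-> (pi (j*n + s)) div n is injective on Omega_m, i.e. a permutation
   lambda_s, and pi (j*n + s) = lambda_s(j)*n + rho(s). *)
From mathcomp Require Import all_boot all_order all_fingroup all_algebra.
Set Implicit Arguments. Unset Strict Implicit. Unset Printing Implicit Defensive.
Import GRing.Theory.
Local Open Scope ring_scope.

Lemma kdiv_kidx m n (j : 'I_m) (s : 'I_n) : kdiv (kidx j s) = j.
Proof.
apply: val_inj => /=; have n_gt0 : (0 < n)%N by apply: leq_ltn_trans (ltn_ord s).
by rewrite divnMDl // divn_small ?addn0 ?ltn_ord.
Qed.

Lemma kmod_kidx m n (j : 'I_m) (s : 'I_n) : kmod (kidx j s) = s.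
Proof. by apply: val_inj => /=; rewrite modnMDl modn_small ?ltn_ord. Qed.

Lemma kidx_kdiv_kmod m n (k : 'I_(m * n)) : kidx (kdiv k) (kmod k) = k.
Proof. by apply: val_inj => /=; rewrite -divn_eq. Qed.

Lemma supp_pmat_subP (F : nzRingType) n (pi : {perm 'I_n}) (B : 'M[F]_n) :
  reflect (forall j, B (pi j) j != 0) (supp (pmat F pi) \subset supp B).
Proof.
apply: (iffP subsetP) => [suppB j | B_pi [i j]].
  by have := suppB (pi j, j); rewrite !inE mxE eqxx oner_neq0 => /(_ isT).
rewrite !inE mxE /=; have [-> _ | _] := eqVneq i (pi j); last by rewrite eqxx.
exact: B_pi.
Qed.

Lemma kron_pmatE (F : pzRingType) m n (A : 'M[F]_m) (rho : {perm 'I_n})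
    (k l : 'I_(m * n)) :
  kron A (pmat F rho) k l =
    if kmod k == rho (kmod l) then A (kdiv k) (kdiv l) else 0.
Proof. by rewrite !mxE; case: eqP; rewrite ?mulr1 ?mulr0. Qed.

Lemma pmat_sub_kron_pmat (F : nzRingType) m n (A : 'M[F]_m)
    (rho : {perm 'I_n}) (pi : {perm 'I_(m * n)}) :
  supp (pmat F pi) \subset supp (kron A (pmat F rho)) ->
  forall k, kmod (pi k) = rho (kmod k) /\ A (kdiv (pi k)) (kdiv k) != 0.
Proof.
move=> /supp_pmat_subP supp_pi k; have := supp_pi k; rewrite kron_pmatE.
by have [-> | _] := eqVneq (kmod (pi k)) (rho (kmod k)); rewrite ?eqxx.
Qed.

Section BlockPerm.

Variables (m n : nat) (rho : {perm 'I_n}) (pi : {perm 'I_(m * n)}).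
Hypothesis pi_kmod : forall k, kmod (pi k) = rho (kmod k).

Lemma block_perm_inj (s : 'I_n) : injective (fun j => kdiv (pi (kidx j s))).
Proof.
move=> j j' eq_kdiv.
have eq_kmod : kmod (pi (kidx j s)) = kmod (pi (kidx j' s)).
  by rewrite !pi_kmod !kmod_kidx.
have /perm_inj : pi (kidx j s) = pi (kidx j' s).
  by rewrite -[LHS]kidx_kdiv_kmod -[RHS]kidx_kdiv_kmod eq_kdiv eq_kmod.
by move/(congr1 (@kdiv m n)); rewrite !kdiv_kidx.
Qed.

Definition block_perm (s : 'I_n) : {perm 'I_m} := perm (@block_perm_inj s).

Lemma block_permE (j : 'I_m) (s : 'I_n) :
  pi (kidx j s) = kidx (block_perm s j) (rho s).
Proof.
have := pi_kmod (kidx j s); rewrite kmod_kidx => <-.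
by rewrite permE kidx_kdiv_kmod.
Qed.

End BlockPerm.

Theorem theorem3p3 (F : fieldType) (m n : nat) (A : 'M[F]_m)
  (rho : {perm 'I_n}) (pi : {perm 'I_(m * n)}) :
  supp (pmat F pi) \subset supp (kron A (pmat F rho)) ->
  exists lambda : 'I_n -> {perm 'I_m},
    (forall (j : 'I_m) (s : 'I_n),
        val (pi (kidx j s)) = (val (lambda s j) * n + val (rho s))%N) /\
    (forall s : 'I_n, supp (pmat F (lambda s)) \subset supp A).
Proof.
move=> /pmat_sub_kron_pmat supp_pi.
have pi_kmod k : kmod (pi k) = rho (kmod k) by case: (supp_pi k).
exists (block_perm pi_kmod); split=> [j s | s].
  by rewrite (block_permE pi_kmod).
apply/supp_pmat_subP => j; have [_] := supp_pi (kidx j s).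
by rewrite (block_permE pi_kmod) !kdiv_kidx.
Qed.
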